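(* Let $M$ be the $8\times8$ matrix (rows and columns indexed $0,\dots,7$) \[ \begin{pmatrix} \frac18&\frac18&\frac18&\frac18&\frac18&\frac18&\frac18&\frac18\\ \frac38&\frac{59}{168}&\frac{17}{56}&\frac{13}{56}&\frac{23}{168}&\frac1{56}&-\frac18&-\frac7{24}\\ \frac58&\frac{85}{168}&\frac7{24}&\frac5{168}&-\frac5{24}&-\frac{55}{168}&-\frac5{24}&\frac7{24}\\ \frac78&\frac{13}{24}&\frac1{24}&-\frac{31}{88}&-\frac{101}{264}&\frac1{88}&\frac{119}{264}&-\frac{49}{264}\\ \frac98&\frac{23}{56}&-\frac38&-\frac{303}{616}&\frac18&\frac{309}{616}&-\frac38&\frac7{88}\\ \frac{11}8&\frac{11}{168}&-\frac{121}{168}&\frac1{56}&\frac{103}{168}&-\frac{363}{728}&\frac{53}{312}&-\frac7{312}\\ \frac{13}8&-\frac{13}{24}&-\frac{13}{24}&\frac{221}{264}&-\frac{13}{24}&\frac{53}{264}&-\frac1{24}&\frac1{264}\\ \frac{15}8&-\frac{35}{24}&\frac78&-\frac{35}{88}&\frac{35}{264}&-\frac{35}{1144}&\frac5{1144}&-\frac1{3432} \end{pmatrix}. \] Consider real vectors $\tilde A=(\tilde A_0,\dots,\tilde A_7)$, $\tilde B=(\tilde B_0,\dots,\tilde B_7)$ satisfying: $\tilde A_0=\tilde B_0=1$; $0\le\tilde A_k\le\tilde B_k$ for $0\le k\le7$; $\sum_k\tilde A_k=4$; $\sum_k\tilde B_k=16$; $\tilde B=2M\tilde A$; $\tilde A_1=\tilde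 B_1$; and $\tilde A_2=\tilde B_2$. Then the unique solution is \[ \tilde A=(1,0,0,0,0,0,3,0),\qquad \tilde B=(1,0,0,\tfrac{49}{11},0,\tfrac{49}{13},3,\tfrac{540}{143}). \]
   Context: This is the normalized intrinsic linear program for two-dimensional codes of depth 3 (detecting the spin-1 and spin-2 sectors) in the spin-$7/2$ irrep $V_{7/2}\cong\mathrm{Sym}^7(\mathbb C^2)$ of $\mathrm{SU}(2)$: $M$ is the unnormalized MacWilliams matrix $M_{k_1k_2}=(-1)^{7+k_1+k_2}(2k_1+1)\{\begin{smallmatrix}7/2&7/2&k_1\\7/2&7/2&k_2\end{smallmatrix}\}$ (Wigner $6j$-symbol), and normalized enumerators are $\tilde A_k=\frac N{K^2}A_k(P,P)$, $\tilde B_k=\frac NKB_k(P,P)$ with $N=8$, $K=2$. *)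

From mathcomp Require Import all_boot all_order all_algebra.
Set Implicit Arguments. Unset Strict Implicit. Unset Printing Implicit Defensive.
Import Order.TTheory GRing.Theory Num.Theory.
Local Open Scope ring_scope.

Definition Mrows : seq (seq (int * int)) :=
  [:: [:: (1,8); (1,8); (1,8); (1,8); (1,8); (1,8); (1,8); (1,8)];
      [:: (3,8); (59,168); (17,56); (13,56); (23,168); (1,56); (-1,8); (-7,24)];
      [:: (5,8); (85,168); (7,24); (5,168); (-5,24); (-55,168); (-5,24); (7,24)];
      [:: (7,8); (13,24); (1,24); (-31,88); (-101,264); (1,88); (119,264); (-49,264)];
      [:: (9,8); (23,56); (-3,8); (-303,616); (1,8); (309,616); (-3,8); (7,88)];
      [:: (11,8); (11,168); (-121,168); (1,56); (103,168); (-363,728); (53,312); (-7,312)];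
      [:: (13,8); (-13,24); (-13,24); (221,264); (-13,24); (53,264); (-1,24); (1,264)];
      [:: (15,8); (-35,24); (7,8); (-35,88); (35,264); (-35,1144); (5,1144); (-1,3432)]]%Z.

Definition qfrac (R : fieldType) (p : int * int) : R := p.1%:~R / p.2%:~R.

Definition Mmat (R : fieldType) : 'M[R]_8 :=
  \matrix_(i < 8, j < 8) qfrac R (nth (0%Z, 1%Z) (nth [::] Mrows i) j).

Definition vec8 (R : fieldType) (s : seq R) : 'cV[R]_8 := \col_(i < 8) nth 0 s i.

Definition A_sol (R : fieldType) : 'cV[R]_8 := vec8 [:: 1; 0; 0; 0; 0; 0; 3; 0].
Definition B_sol (R : fieldType) : 'cV[R]_8 :=
  vec8 [:: 1; 0; 0; 49 / 11; 0; 49 / 13; 3; 540 / 143].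

(* The normalized intrinsic LP constraints (depth 3, spin 7/2, K = 2). *)
Definition LP_feasible (R : realFieldType) (A B : 'cV[R]_8) : Prop :=
  [/\ A ord0 ord0 = 1 /\ B ord0 ord0 = 1,
      (forall k : 'I_8, 0 <= A k ord0 <= B k ord0),
      \sum_(k < 8) A k ord0 = 4 /\ \sum_(k < 8) B k ord0 = 16,
      B = 2%:R *: (Mmat R *m A) &
      A (inord 1) ord0 = B (inord 1) ord0 /\
      A (inord 2) ord0 = B (inord 2) ord0].

From mathcomp Require Import all_boot all_order all_algebra lra.
(* Summing the two detection constraints B_1 = A_1 and B_2 = A_2 (rows 1 and 2
   of B = 2 M A) and eliminating A_0 and A_6 with the normalizations A_0 = 1,
   sum A = 4 leaves a linear form in A_1, A_2, A_3, A_4, A_5, A_7 with strictly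
   positive coefficients that must vanish.  Since A >= 0, A is supported on
   {0, 6}, hence A = (1,0,0,0,0,0,3,0), and B = 2 M A is then forced. *)

Set Implicit Arguments. Unset Strict Implicit. Unset Printing Implicit Defensive.
Import Order.TTheory GRing.Theory Num.Theory.
Local Open Scope ring_scope.

Lemma inord0 (n : nat) : inord 0 = ord0 :> 'I_n.+1.
Proof. by apply/val_inj; rewrite /= inordK. Qed.

Lemma big_ord_inord (R : nmodType) (n : nat) (F : 'I_n.+1 -> R) :
  \sum_(i < n.+1) F i = \sum_(0 <= j < n.+1) F (inord j).
Proof. by rewrite big_mkord; apply: eq_bigr => i _; rewrite inord_val. Qed.

Section MacWilliams.
Variable R : realFieldType.

Lemma vec8_inordE (s : seq R) (k : nat) : (k < 8)%N -> vec8 s (inord k) ord0 = nth 0 s k.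
Proof. by move=> lt_k8; rewrite mxE inordK. Qed.

Lemma vec8_entries (A : 'cV[R]_8) : vec8 [seq A (inord k) ord0 | k <- iota 0 8] = A.
Proof.
apply/matrixP => i j; rewrite mxE (ord1 j) (nth_map 0%N) ?size_iota //.
by rewrite nth_iota // add0n inord_val.
Qed.

Lemma scale_Mmat_mulE (c : R) (A : 'cV[R]_8) (i : nat) : (i < 8)%N ->
  (c *: (Mmat R *m A)) (inord i) ord0 =
  c * \sum_(0 <= j < 8) qfrac R (nth (0%Z, 1%Z) (nth [::] Mrows i) j) * A (inord j) ord0.
Proof.
move=> lt_i8; rewrite !mxE big_ord_inord; congr (_ * _); apply: eq_big_nat => j /andP[_ lt_j8].
by rewrite mxE !inordK.
Qed.

Lemma scale_Mmat_A_sol : 2%:R *: (Mmat R *m A_sol R) = B_sol R.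
Proof.
rewrite -[LHS]vec8_entries /= !scale_Mmat_mulE //.
rewrite /index_iota /= !big_cons !big_nil /A_sol !vec8_inordE // /qfrac /=.
by congr vec8; congr [:: _; _; _; _; _; _; _; _]; lra.
Qed.

Lemma detection_identity (A B : 'cV[R]_8) : B = 2%:R *: (Mmat R *m A) ->
  21 * ((B (inord 1) ord0 - A (inord 1) ord0) + (B (inord 2) ord0 - A (inord 2) ord0)) =
  14 * (4 * A (inord 0) ord0 - \sum_(k < 8) A k ord0)
  + (29 * A (inord 1) ord0 + 18 * A (inord 2) ord0 + 25 * A (inord 3) ord0
     + 11 * A (inord 4) ord0 + A (inord 5) ord0 + 14 * A (inord 7) ord0).
Proof.
move=> ->; rewrite !scale_Mmat_mulE // big_ord_inord.
rewrite /index_iota /= !big_cons !big_nil /qfrac /=; lra.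
Qed.

Lemma LP_feasible_eq_A_sol (A B : 'cV[R]_8) : LP_feasible A B -> A = A_sol R.
Proof.
case=> [[A_ord0 _] A_B_ge0 [sumA _] defB [detect1 detect2]].
have A0 : A (inord 0) ord0 = 1 by rewrite inord0.
have A_ge0 k : (k < 8)%N -> 0 <= A (inord k) ord0.
  by move=> _; case/andP: (A_B_ge0 (inord k)).
have := detection_identity defB; rewrite -detect1 -detect2 sumA A0.
move: (A_ge0 1%N isT) (A_ge0 2%N isT) (A_ge0 3%N isT) (A_ge0 4%N isT)
      (A_ge0 5%N isT) (A_ge0 7%N isT) => ge0_1 ge0_2 ge0_3 ge0_4 ge0_5 ge0_7 weighted_sum.
have A1 : A (inord 1) ord0 = 0 by lra.
have A2 : A (inord 2) ord0 = 0 by lra.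
have A3 : A (inord 3) ord0 = 0 by lra.
have A4 : A (inord 4) ord0 = 0 by lra.
have A5 : A (inord 5) ord0 = 0 by lra.
have A7 : A (inord 7) ord0 = 0 by lra.
move: sumA; rewrite big_ord_inord /index_iota /= !big_cons big_nil.
rewrite A0 A1 A2 A3 A4 A5 A7 => sumA.
have A6 : A (inord 6) ord0 = 3 by lra.
by rewrite -[A]vec8_entries /= A0 A1 A2 A3 A4 A5 A6 A7.
Qed.

Lemma LP_feasible_sol : LP_feasible (A_sol R) (B_sol R).
Proof.
split.
- by rewrite !mxE.
- case=> -[|[|[|[|[|[|[|[|//]]]]]]]] lt_k8; rewrite !mxE /=; lra.
- by rewrite !big_ord_inord /index_iota /= !big_cons !big_nil !vec8_inordE //=; split; lra.
- by rewrite scale_Mmat_A_sol.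
- by rewrite !vec8_inordE.
Qed.

End MacWilliams.

Theorem mainTheorem13 (R : realFieldType) (A B : 'cV[R]_8) :
  LP_feasible A B <-> (A = A_sol R /\ B = B_sol R).
Proof.
split; last by case=> -> ->; apply: LP_feasible_sol.
move=> feasible; have defA := LP_feasible_eq_A_sol feasible.
case: feasible => _ _ _ defB _.
by rewrite defB defA scale_Mmat_A_sol.
Qed.
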